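(* For every integer $d\ge 1$ there exist infinite families $\mathcal A$ and $\mathcal B$ of closed convex sets in $\mathbb R^d$ such that $\pi(\mathcal A)=\infty$, every member of $\mathcal B$ is bounded, and the family $\mathcal F=\mathcal A\cup\mathcal B$ satisfies the $(d+2k,d+k)$-property for every integer $k\ge 0$.
   Context: A family of at least $p$ sets satisfies the $(p,q)$-property if among any $p$ of its members there are $q$ with a common point. The piercing number $\pi(\mathcal A)$ is the minimum cardinality of a set of points meeting every member of $\mathcal A$, and $\pi(\mathcal A)=\infty$ if no finite such set exists. *)

From Stdlib Require Fin.
From Stdlib Require Import Reals List.
Import ListNotations.
Open Scope R_scope.

Definition point (d : nat) : Type := Fin.t d -> R.

Definition rset (d : nat) : Type := point d -> Prop.

Definition setfam (d : nat) : Type := rset d -> Prop.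

Definition same_set {d : nat} (S T : rset d) : Prop := forall x, S x <-> T x.

(* Closedness w.r.t. the (sup-)metric topology of R^d (equivalent to the
   Euclidean topology). *)
Definition is_closed {d : nat} (S : rset d) : Prop :=
  forall x : point d,
    (forall eps : R, 0 < eps ->
       exists y, S y /\ forall i, Rabs (x i - y i) < eps) ->
    S x.

Definition is_convex {d : nat} (S : rset d) : Prop :=
  forall (x y : point d) (t : R), 0 <= t <= 1 -> S x -> S y ->
    S (fun i => t * x i + (1 - t) * y i).

Definition is_bounded {d : nat} (S : rset d) : Prop :=
  exists M : R, forall x, S x -> forall i, Rabs (x i) <= M.

Fixpoint pw_distinct {d : nat} (L : list (rset d)) : Prop :=
  match L with
  | [] => True
  | X :: L0 => Forall (fun T => ~ same_set X T) L0 /\ pw_distinct L0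
  end.

Definition members {d : nat} (F : setfam d) (L : list (rset d)) : Prop :=
  Forall F L /\ pw_distinct L.

Definition infinite_family {d : nat} (F : setfam d) : Prop :=
  forall n : nat, exists L, members F L /\ length L = n.

Definition common_point {d : nat} (L : list (rset d)) : Prop :=
  exists x : point d, Forall (fun S => S x) L.

Definition pq_property {d : nat} (p q : nat) (F : setfam d) : Prop :=
  (exists L, members F L /\ length L = p) /\
  forall L, members F L -> length L = p ->
    exists M, incl M L /\ pw_distinct M /\ length M = q /\ common_point M.

Definition finitely_pierceable {d : nat} (F : setfam d) : Prop :=
  exists P : list (point d), forall S, F S -> exists x, In x P /\ S x.

Definition piercing_infinite {d : nat} (F : setfam d) : Prop :=
  ~ finitely_pierceable F.

Definition setfam_union {d : nat} (A B : setfam d) : setfam d :=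
  fun S => A S \/ B S.

(* [x] lies in [A_n] when the last coordinate [x_d] dominates
   [(n + 1) |p_x(2 ^ n)|], with [p_x(s) = 1 - x_1 s - ... - x_(d-1) s^(d-1)].
   Any finitely many [A_n] share a far point of the last axis; any [d - 1] of
   them share with all the cubes [B_k] the point whose first coordinates are
   the coefficients of a polynomial vanishing at the corresponding [2 ^ n];
   and no point lies in infinitely many [A_n], since a polynomial of degree
   [< d] with constant term [1] cannot be small at [d] widely separated
   points [2 ^ n].  Counting how a selection of [d + 2k] sets splits between
   the two families then gives the [(d + 2k, d + k)]-property. *)

From Stdlib Require Import Reals List Arith Sorted Lra Lia Classical.
Import ListNotations.
Local Open Scope R_scope.

(* [horner c k s] is [c 0 + c 1 * s + ... + c k * s ^ k]: a polynomial is a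
   coefficient sequence read up to an explicit degree bound [k]. *)
Fixpoint horner (c : nat -> R) (k : nat) (s : R) : R :=
  match k with
  | O => c O
  | S k' => s * horner (fun i => c (S i)) k' s + c O
  end.

Lemma horner_ext k c c' s :
  (forall i, (i <= k)%nat -> c i = c' i) -> horner c k s = horner c' k s.
Proof.
  revert c c'; induction k as [|k IH]; intros c c' Hc; simpl.
  - apply Hc; lia.
  - rewrite (IH _ (fun i => c' (S i))) by (intros; apply Hc; lia).
    rewrite (Hc O) by lia; reflexivity.
Qed.

Lemma horner_0 k c : horner c k 0 = c O.
Proof. destruct k; simpl; [reflexivity | ring]. Qed.

Lemma horner_lincomb k c c' a b s :
  horner (fun i => a * c i + b * c' i) k s = a * horner c k s + b * horner c' k s.
Proof.
  revert c c'; induction k as [|k IH]; intros c c'; simpl; [ring|].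
  rewrite (IH (fun i => c (S i)) (fun i => c' (S i))); ring.
Qed.

Lemma horner_lipschitz k s : exists L, 0 <= L /\ forall c c' e, 0 <= e ->
  (forall i, Rabs (c i - c' i) <= e) -> Rabs (horner c k s - horner c' k s) <= L * e.
Proof.
  induction k as [|k [L [HL IH]]].
  - exists 1; split; [lra|]; intros c c' e _ H; rewrite Rmult_1_l; apply H.
  - exists (Rabs s * L + 1); split; [pose proof (Rmult_le_pos _ _ (Rabs_pos s) HL); lra|].
    intros c c' e He H; simpl.
    replace (s * horner (fun i => c (S i)) k s + c O - (s * horner (fun i => c' (S i)) k s + c' O))
      with (s * (horner (fun i => c (S i)) k s - horner (fun i => c' (S i)) k s) + (c O - c' O))
      by ring.
    eapply Rle_trans; [apply Rabs_triang|]; rewrite Rabs_mult.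
    pose proof (Rmult_le_compat_l _ _ _ (Rabs_pos s) (IH _ _ e He (fun i => H (S i)))).
    pose proof (H O); nra.
Qed.

Lemma horner_eq0 k c s : (forall i, (i <= k)%nat -> c i = 0) -> horner c k s = 0.
Proof.
  revert c; induction k as [|k IH]; intros c Hc; simpl.
  - apply Hc; lia.
  - rewrite IH by (intros; apply Hc; lia).
    rewrite Hc by lia; ring.
Qed.

Lemma horner_low_degree k r c s : (r <= k)%nat ->
  (forall i, (r < i <= k)%nat -> c i = 0) -> horner c k s = horner c r s.
Proof.
  revert k c; induction r as [|r IH]; intros [|k] c Hrk Hc; try lia; simpl;
    try reflexivity.
  - rewrite horner_eq0 by (intros; apply Hc; lia); ring.
  - rewrite (IH k) by (try lia; intros; apply Hc; lia); reflexivity.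
Qed.

Lemma horner_factor_root k c a : exists c', forall s,
  horner c (S k) s - horner c (S k) a = (s - a) * horner c' k s.
Proof.
  revert c; induction k as [|k IH]; intros c.
  - exists (fun _ => c 1%nat); intros s; simpl; ring.
  - destruct (IH (fun i => c (S i))) as [c' Hc'].
    exists (fun i => match i with O => horner (fun i => c (S i)) (S k) a | S i => c' i end).
    intros s; specialize (Hc' s).
    change (horner c (S (S k)) s) with (s * horner (fun i => c (S i)) (S k) s + c O).
    change (horner c (S (S k)) a) with (a * horner (fun i => c (S i)) (S k) a + c O).
    set (h := horner (fun i => c (S i)) (S k)) in *.
    change (horner _ (S k) s) with (s * horner c' k s + h a).
    replace (h s) with (h a + (s - a) * horner c' k s) by lra; ring.
Qed.

Lemma horner_mul_linear k c b : exists c', c' O = c O /\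
  (forall i, Rabs (c' (S i)) <= Rabs (c (S i)) + Rabs b * Rabs (c i)) /\
  forall s, (1 - b * s) * horner c k s = horner c' (S k) s.
Proof.
  revert c; induction k as [|k IH]; intros c.
  - exists (fun i => match i with O => c O | 1%nat => - b * c O | _ => 0 end).
    split; [reflexivity | split].
    + intros [|[|i]]; simpl.
      * rewrite Rabs_mult, Rabs_Ropp; pose proof (Rabs_pos (c 1%nat)); lra.
      * rewrite Rabs_R0; pose proof (Rabs_pos (c 2%nat)).
        pose proof (Rmult_le_pos _ _ (Rabs_pos b) (Rabs_pos (c 1%nat))); lra.
      * rewrite Rabs_R0; pose proof (Rabs_pos (c (S (S (S i))))).
        pose proof (Rmult_le_pos _ _ (Rabs_pos b) (Rabs_pos (c (S (S i))))); lra.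
    + intros s; simpl; ring.
  - destruct (IH (fun i => c (S i))) as [c' [Hc'0 [Hc'b Hc's]]].
    exists (fun i => match i with O => c O | 1%nat => c' O - b * c O | S i => c' i end).
    split; [reflexivity | split].
    + intros [|i].
      * rewrite Hc'0; unfold Rminus; eapply Rle_trans; [apply Rabs_triang|].
        rewrite Rabs_Ropp, Rabs_mult; lra.
      * destruct i; [|apply Hc'b].
        specialize (Hc'b O); simpl in *; exact Hc'b.
    + intros s.
      change (horner c (S k) s) with (s * horner (fun i => c (S i)) k s + c O).
      transitivity (s * ((1 - b * s) * horner (fun i => c (S i)) k s - b * c O) + c O);
        [ring|].
      rewrite Hc's; simpl; ring.
Qed.

Lemma pow2_ge1 n : 1 <= 2 ^ n.
Proof. apply pow_R1_Rle; lra. Qed.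

(* Product of the factors [1 - s / 2 ^ n] over [n] in [ns]. *)
Lemma horner_with_roots (ns : list nat) : exists c, c O = 1 /\
  (forall i, Rabs (c i) <= 2 ^ length ns) /\
  forall n, In n ns -> horner c (length ns) (2 ^ n) = 0.
Proof.
  induction ns as [|n ns [c [Hc0 [Hcb Hcr]]]].
  - exists (fun i => match i with O => 1 | _ => 0 end).
    split; [reflexivity | split; [|intros n []]].
    intros [|i]; simpl; rewrite ?Rabs_R1, ?Rabs_R0; lra.
  - destruct (horner_mul_linear (length ns) c (/ 2 ^ n)) as [c' [Hc'0 [Hc'b Hc's]]].
    assert (Hinv : 0 < / 2 ^ n <= 1).
    { pose proof (pow2_ge1 n); split; [apply Rinv_0_lt_compat; lra|].
      rewrite <- Rinv_1; apply Rinv_le_contravar; lra. }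
    exists c'; split; [congruence | split]; simpl length; simpl pow.
    + intros [|i].
      * rewrite Hc'0, Hc0, Rabs_R1; pose proof (pow2_ge1 (length ns)); lra.
      * rewrite Rabs_pos_eq in Hc'b by lra.
        specialize (Hc'b i); pose proof (Hcb (S i)); pose proof (Hcb i).
        pose proof (Rabs_pos (c i)); nra.
    + intros m [<- | Hm]; rewrite <- Hc's.
      * rewrite Rinv_l by (apply pow_nonzero; lra); ring.
      * rewrite Hcr by exact Hm; ring.
Qed.

(* If the value at the largest point [a] is small, factor
   [q s - q a = (s - a) g s]: then [a |g 0|] is close to [|q 0|], and at the
   remaining points [b <= a / 2] we get [|q b| >= (a - b) |g b| - |q a|]. *)
Lemma horner_large_at_some_power m c ns :
  length ns = S m -> StronglySorted gt ns ->
  exists n, In n ns /\ Rabs (c O) / 8 ^ m <= Rabs (horner c m (2 ^ n)).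
Proof.
  revert c ns; induction m as [|m IH]; intros c ns Hlen Hsort.
  - destruct ns as [|n [|]]; try discriminate.
    exists n; split; [left; reflexivity | simpl; lra].
  - destruct ns as [|n0 ns]; try discriminate.
    inversion Hsort as [|? ? Hsort' Hgt]; subst.
    set (a := 2 ^ n0); set (q := horner c (S m)); set (K := Rabs (c O) / 8 ^ S m).
    destruct (Rle_lt_dec K (Rabs (q a))) as [Hqa | Hqa].
    { exists n0; split; [left; reflexivity | exact Hqa]. }
    destruct (horner_factor_root m c a) as [c' Hfac].
    destruct (IH c' ns) as [n [Hn Hgb]]; [simpl in Hlen; lia | exact Hsort' |].
    exists n; split; [right; exact Hn|].
    set (b := 2 ^ n) in *; set (g := horner c' m b) in *.
    assert (Hb : 0 < b /\ 2 * b <= a).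
    { rewrite Forall_forall in Hgt; specialize (Hgt n Hn).
      split; [apply pow_lt; lra|].
      change (2 * b) with (2 ^ S n); apply Rle_pow; [lra | lia]. }
    assert (HP : 1 <= 8 ^ m) by (apply pow_R1_Rle; lra).
    assert (HK : Rabs (c O) = 8 * 8 ^ m * K) by (unfold K; simpl; field; lra).
    assert (Hc'0 : Rabs (c O - q a) = a * Rabs (c' O)).
    { specialize (Hfac 0); unfold q in *; rewrite !horner_0 in Hfac.
      replace (c O - horner c (S m) a) with (- a * c' O) by lra.
      rewrite Rabs_mult, Rabs_Ropp, Rabs_pos_eq; [reflexivity | unfold a; left; apply pow_lt; lra]. }
    assert (Hqb : Rabs (q b - q a) = (a - b) * Rabs g).
    { rewrite Hfac; fold g; rewrite Rabs_mult, Rabs_minus_sym, Rabs_pos_eq by lra; reflexivity. }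
    pose proof (Rabs_triang_inv (c O) (q a)) as Htri1.
    pose proof (Rabs_triang_inv (q b - q a) (- q a)) as Htri2.
    replace (q b - q a - - q a) with (q b) in Htri2 by ring; rewrite Rabs_Ropp in Htri2.
    assert (Hg : Rabs (c' O) <= 8 ^ m * Rabs g).
    { replace (Rabs (c' O)) with (Rabs (c' O) / 8 ^ m * 8 ^ m) by (field; lra).
      rewrite (Rmult_comm (8 ^ m)); apply Rmult_le_compat_r; lra. }
    assert (Hg2 : a * Rabs (c' O) <= 2 * 8 ^ m * ((a - b) * Rabs g)).
    { pose proof (Rabs_pos (c' O)); pose proof (Rabs_pos g); nra. }
    assert (0 <= K)
      by (unfold K; apply Rmult_le_pos; [apply Rabs_pos | left; apply Rinv_0_lt_compat, pow_lt; lra]).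
    nra.
Qed.

(* Junk value [0] for [j >= d]. *)
Definition coord {d : nat} (x : point d) (j : nat) : R :=
  match lt_dec j d with left h => x (Fin.of_nat_lt h) | right _ => 0 end.

Definition point_of_seq (d : nat) (f : nat -> R) : point d :=
  fun i => f (proj1_sig (Fin.to_nat i)).

Lemma coord_point_of_seq d f j : (j < d)%nat -> coord (point_of_seq d f) j = f j.
Proof.
  intros Hj; unfold coord, point_of_seq; destruct (lt_dec j d); [|lia].
  rewrite Fin.to_nat_of_nat; reflexivity.
Qed.

Definition sup_lipschitz {d : nat} (f : point d -> R) : Prop :=
  exists L, 0 <= L /\ forall x y e, 0 <= e ->
    (forall i, Rabs (x i - y i) <= e) -> Rabs (f x - f y) <= L * e.

Lemma closed_le {d : nat} (f g : point d -> R) :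
  sup_lipschitz f -> sup_lipschitz g -> is_closed (fun x => f x <= g x).
Proof.
  intros [Lf [HLf Hf]] [Lg [HLg Hg]] x Hx.
  destruct (Rle_lt_dec (f x) (g x)) as [H | H]; [exact H | exfalso].
  set (e := (f x - g x) / (2 * (1 + Lf + Lg))).
  assert (He : 0 < e) by (unfold e; apply Rdiv_lt_0_compat; lra).
  destruct (Hx e He) as [y [Hy Hxy]].
  assert (Hxy' : forall i, Rabs (x i - y i) <= e) by (intros i; left; apply Hxy).
  assert (Hyx' : forall i, Rabs (y i - x i) <= e)
    by (intros i; rewrite Rabs_minus_sym; apply Hxy').
  specialize (Hf x y e (Rlt_le _ _ He) Hxy'); specialize (Hg y x e (Rlt_le _ _ He) Hyx').
  pose proof (Rle_abs (f x - f y)); pose proof (Rle_abs (g y - g x)).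
  assert (Hee : e * (1 + Lf + Lg) = (f x - g x) / 2) by (unfold e; field; lra).
  nra.
Qed.

Lemma closed_forall {d : nat} {I : Type} (S : I -> rset d) :
  (forall i, is_closed (S i)) -> is_closed (fun x => forall i, S i x).
Proof.
  intros HS x Hx i; apply HS; intros e He.
  destruct (Hx e He) as [y [Hy Hxy]]; exists y; auto.
Qed.

Lemma sup_lipschitz_const {d : nat} (r : R) : sup_lipschitz (fun _ : point d => r).
Proof. exists 0; split; [lra|]; intros; rewrite Rminus_diag, Rabs_R0; lra. Qed.

Lemma sup_lipschitz_eval {d : nat} (i : Fin.t d) : sup_lipschitz (fun x : point d => x i).
Proof. exists 1; split; [lra|]; intros x y e _ H; rewrite Rmult_1_l; apply H. Qed.

Lemma coord_close {d : nat} (x y : point d) e j : 0 <= e ->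
  (forall i, Rabs (x i - y i) <= e) -> Rabs (coord x j - coord y j) <= e.
Proof.
  intros He H; unfold coord; destruct (lt_dec j d); [apply H|].
  rewrite Rminus_0_r, Rabs_R0; exact He.
Qed.

Lemma sup_lipschitz_coord {d : nat} (j : nat) : sup_lipschitz (fun x : point d => coord x j).
Proof.
  exists 1; split; [lra|]; intros x y e He H; rewrite Rmult_1_l; apply coord_close; assumption.
Qed.

Lemma sup_lipschitz_abs {d : nat} (f : point d -> R) :
  sup_lipschitz f -> sup_lipschitz (fun x => Rabs (f x)).
Proof.
  intros [L [HL Hf]]; exists L; split; [exact HL|]; intros x y e He H.
  eapply Rle_trans; [apply Rabs_triang_inv2 | apply Hf; assumption].
Qed.

Lemma sup_lipschitz_scale {d : nat} (a : R) (f : point d -> R) :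
  sup_lipschitz f -> sup_lipschitz (fun x => a * f x).
Proof.
  intros [L [HL Hf]]; exists (Rabs a * L); split; [apply Rmult_le_pos; [apply Rabs_pos | exact HL]|].
  intros x y e He H; rewrite <- Rmult_minus_distr_l, Rabs_mult, Rmult_assoc.
  apply Rmult_le_compat_l; [apply Rabs_pos | apply Hf; assumption].
Qed.

Definition convex_fun {d : nat} (f : point d -> R) : Prop :=
  forall x y t, 0 <= t <= 1 ->
    f (fun i => t * x i + (1 - t) * y i) <= t * f x + (1 - t) * f y.

Definition affine_fun {d : nat} (f : point d -> R) : Prop :=
  forall x y t, f (fun i => t * x i + (1 - t) * y i) = t * f x + (1 - t) * f y.

Lemma convex_le {d : nat} (f g : point d -> R) :
  convex_fun f -> affine_fun g -> is_convex (fun x => f x <= g x).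
Proof.
  intros Hf Hg x y t Ht Hx Hy; rewrite Hg.
  eapply Rle_trans; [apply Hf; exact Ht|].
  apply Rplus_le_compat; apply Rmult_le_compat_l; lra.
Qed.

Lemma convex_forall {d : nat} {I : Type} (S : I -> rset d) :
  (forall i, is_convex (S i)) -> is_convex (fun x => forall i, S i x).
Proof. intros HS x y t Ht Hx Hy i; apply HS; auto. Qed.

Lemma affine_const {d : nat} (r : R) : affine_fun (fun _ : point d => r).
Proof. intros x y t; ring. Qed.

Lemma affine_eval {d : nat} (i : Fin.t d) : affine_fun (fun x : point d => x i).
Proof. intros x y t; reflexivity. Qed.

Lemma affine_coord {d : nat} (j : nat) : affine_fun (fun x : point d => coord x j).
Proof. intros x y t; unfold coord; destruct (lt_dec j d); [reflexivity | ring]. Qed.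

Lemma convex_abs {d : nat} (f : point d -> R) :
  affine_fun f -> convex_fun (fun x => Rabs (f x)).
Proof.
  intros Hf x y t Ht; rewrite Hf.
  eapply Rle_trans; [apply Rabs_triang|].
  rewrite !Rabs_mult, (Rabs_pos_eq t), (Rabs_pos_eq (1 - t)) by lra; lra.
Qed.

Lemma convex_scale {d : nat} (a : R) (f : point d -> R) :
  0 <= a -> convex_fun f -> convex_fun (fun x => a * f x).
Proof.
  intros Ha Hf x y t Ht.
  pose proof (Rmult_le_compat_l a _ _ Ha (Hf x y t Ht)); lra.
Qed.

Definition point_poly {d : nat} (x : point d) : nat -> R :=
  fun j => match j with O => 1 | S j => - coord x j end.

Lemma sup_lipschitz_horner_point_poly {d : nat} k s :
  sup_lipschitz (fun x : point d => horner (point_poly x) k s).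
Proof.
  destruct (horner_lipschitz k s) as [L [HL H]]; exists L; split; [exact HL|].
  intros x y e He Hxy; apply H; [exact He|]; intros [|j]; simpl.
  - rewrite Rminus_diag, Rabs_R0; exact He.
  - replace (- coord x j - - coord y j) with (- (coord x j - coord y j)) by ring.
    rewrite Rabs_Ropp; apply coord_close; assumption.
Qed.

Lemma affine_horner_point_poly {d : nat} k s :
  affine_fun (fun x : point d => horner (point_poly x) k s).
Proof.
  intros x y t; rewrite <- horner_lincomb; apply horner_ext; intros [|j] _; simpl; [ring|].
  rewrite (affine_coord j x y t); ring.
Qed.

(* Coordinates are 0-indexed: [coord x (pred d)] is [x_d], and [point_poly x]
   is [p_x], with coefficients [1, -x_1, ..., -x_(d-1)]. *)
Definition Aset (d n : nat) : rset d :=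
  fun x => (INR n + 1) * Rabs (horner (point_poly x) (pred d) (2 ^ n)) <= coord x (pred d).

Definition Bset (d k : nat) : rset d :=
  fun x => forall i, Rabs (x i) <= 2 ^ pred d + INR k.

Definition Afam (d : nat) : setfam d := fun S => exists n, S = Aset d n.
Definition Bfam (d : nat) : setfam d := fun S => exists k, S = Bset d k.

Lemma Aset_closed d n : is_closed (Aset d n).
Proof.
  apply closed_le; [|apply sup_lipschitz_coord].
  apply sup_lipschitz_scale, sup_lipschitz_abs, sup_lipschitz_horner_point_poly.
Qed.

Lemma Aset_convex d n : is_convex (Aset d n).
Proof.
  apply convex_le; [|apply affine_coord].
  apply convex_scale; [pose proof (pos_INR n); lra|].
  apply convex_abs, affine_horner_point_poly.
Qed.

Lemma Bset_closed d k : is_closed (Bset d k).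
Proof.
  apply closed_forall; intros i.
  apply (closed_le (fun x => Rabs (x i))); [apply sup_lipschitz_abs, sup_lipschitz_eval|].
  apply sup_lipschitz_const.
Qed.

Lemma Bset_convex d k : is_convex (Bset d k).
Proof.
  apply convex_forall; intros i.
  apply (convex_le (fun x => Rabs (x i))); [apply convex_abs, affine_eval | apply affine_const].
Qed.

Lemma Bset_bounded d k : is_bounded (Bset d k).
Proof. exists (2 ^ pred d + INR k); intros x Hx; exact Hx. Qed.

Lemma Bset_coord d k x j : Bset d k x -> Rabs (coord x j) <= 2 ^ pred d + INR k.
Proof.
  intros Hx; unfold coord; destruct (lt_dec j d); [apply Hx|].
  rewrite Rabs_R0; pose proof (pow2_ge1 (pred d)); pose proof (pos_INR k); lra.
Qed.

Lemma Bset_const d k r : 0 <= r <= 2 ^ pred d + INR k -> Bset d k (fun _ => r).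
Proof. intros Hr i; rewrite Rabs_pos_eq; lra. Qed.

Definition axis_point (d : nat) (Y : R) : point d :=
  point_of_seq d (fun j => if Nat.eqb j (pred d) then Y else 0).

Lemma coord_axis_point d Y : (1 <= d)%nat -> coord (axis_point d Y) (pred d) = Y.
Proof. intros Hd; unfold axis_point; rewrite coord_point_of_seq, Nat.eqb_refl by lia; reflexivity. Qed.

Lemma Aset_axis_point d n Y : (1 <= d)%nat -> Aset d n (axis_point d Y) <-> INR n + 1 <= Y.
Proof.
  intros Hd; unfold Aset; rewrite coord_axis_point by exact Hd.
  rewrite (horner_low_degree _ 0); [simpl; rewrite Rabs_R1, Rmult_1_r; tauto | lia|].
  intros [|j] Hj; [lia|]; simpl; unfold axis_point.
  rewrite coord_point_of_seq, (proj2 (Nat.eqb_neq j (pred d))) by lia; ring.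
Qed.

Lemma Aset_inj d i j : (1 <= d)%nat -> (i < j)%nat -> ~ same_set (Aset d i) (Aset d j).
Proof.
  intros Hd Hij Hs; apply lt_INR in Hij.
  assert (H : Aset d i (axis_point d (INR i + 1))) by (apply (Aset_axis_point _ _ _ Hd); lra).
  apply Hs, (Aset_axis_point _ _ _ Hd) in H; lra.
Qed.

Lemma Bset_inj d i j : (1 <= d)%nat -> (i < j)%nat -> ~ same_set (Bset d i) (Bset d j).
Proof.
  intros Hd Hij Hs; apply lt_INR in Hij.
  assert (Hr : 0 <= 2 ^ pred d + INR j) by (pose proof (pow2_ge1 (pred d)); pose proof (pos_INR j); lra).
  assert (H : Bset d j (fun _ => 2 ^ pred d + INR j)) by (apply Bset_const; lra).
  apply Hs, (Bset_coord _ _ _ (pred d)) in H.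
  unfold coord in H; destruct (lt_dec (pred d) d); [|lia].
  rewrite Rabs_pos_eq in H by exact Hr; lra.
Qed.

Lemma Aset_neq_Bset d n k : (1 <= d)%nat -> ~ same_set (Aset d n) (Bset d k).
Proof.
  intros Hd Hs.
  pose proof (pos_INR n); pose proof (pow2_ge1 (pred d)); pose proof (pos_INR k).
  assert (HA : Aset d n (axis_point d (INR n + 1 + 2 ^ pred d + INR k)))
    by (apply (Aset_axis_point _ _ _ Hd); lra).
  apply Hs, (Bset_coord _ _ _ (pred d)) in HA.
  rewrite coord_axis_point, Rabs_pos_eq in HA by (exact Hd || lra); lra.
Qed.

Lemma Afam_common_point d M : (1 <= d)%nat -> Forall (Afam d) M -> common_point M.
Proof.
  intros Hd HM; apply Forall_image in HM as [ns ->].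
  exists (axis_point d (INR (list_max ns) + 1)).
  pose proof (proj1 (list_max_le ns (list_max ns)) (le_n _)) as Hmax.
  apply Forall_map; rewrite Forall_forall in *; intros n Hn.
  apply (Aset_axis_point _ _ _ Hd), Rplus_le_compat_r, le_INR, Hmax, Hn.
Qed.

(* The coordinates are the coefficients of [prod_(n in ns) (1 - s / 2 ^ n)],
   so the polynomial vanishes at every [2 ^ n], while the last coordinate is
   [0] and all coordinates are at most [2 ^ (d - 1)] in absolute value. *)
Lemma exists_point_in_Asets_Bsets d ns : (length ns < d)%nat ->
  exists x : point d, (forall n, In n ns -> Aset d n x) /\ (forall k, Bset d k x).
Proof.
  intros Hlen; destruct (horner_with_roots ns) as [c [Hc0 [Hcb Hroots]]].
  set (r := length ns) in *.
  set (x := point_of_seq d (fun j => if (S j <=? r)%nat then - c (S j) else 0)).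
  assert (Hpoly : forall s, horner (point_poly x) (pred d) s = horner c r s).
  { intros s; rewrite (horner_low_degree _ r); [|lia|].
    2: { intros [|j] Hj; [lia|]; simpl; unfold x.
         rewrite coord_point_of_seq, (proj2 (Nat.leb_gt _ _)) by lia; ring. }
    apply horner_ext; intros [|j] Hj; simpl; [symmetry; exact Hc0|].
    unfold x; rewrite coord_point_of_seq, (proj2 (Nat.leb_le _ _)) by lia; ring. }
  exists x; split.
  - intros n Hn; unfold Aset; rewrite Hpoly, Hroots, Rabs_R0, Rmult_0_r by exact Hn.
    unfold x; rewrite coord_point_of_seq, (proj2 (Nat.leb_gt _ _)) by lia; lra.
  - intros k i; unfold x, point_of_seq.
    pose proof (pos_INR k); pose proof (pow2_ge1 (pred d)).
    assert (2 ^ r <= 2 ^ pred d) by (apply Rle_pow; [lra | lia]).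
    destruct (_ <=? r)%nat; [rewrite Rabs_Ropp; pose proof (Hcb (S (proj1_sig (Fin.to_nat i))))
                            | rewrite Rabs_R0]; lra.
Qed.

Lemma Afam_Bfam_common_point d MA MB : Forall (Afam d) MA -> (length MA < d)%nat ->
  Forall (Bfam d) MB -> common_point (MA ++ MB).
Proof.
  intros HA Hlen HB; apply Forall_image in HA as [ns ->]; apply Forall_image in HB as [ks ->].
  rewrite length_map in Hlen; destruct (exists_point_in_Asets_Bsets d ns Hlen) as [x [HxA HxB]].
  exists x; apply Forall_app; split; apply Forall_map, Forall_forall; auto.
Qed.

Lemma sorted_witnesses (P : nat -> Prop) (M : nat) :
  (forall N, exists n, (N <= n)%nat /\ P n) ->
  forall k, exists ns, length ns = k /\ StronglySorted gt ns /\
    forall n, In n ns -> (M <= n)%nat /\ P n.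
Proof.
  intros HP k; induction k as [|k [ns [Hlen [Hsort Hns]]]].
  - exists []; split; [reflexivity | split; [constructor | intros n []]].
  - destruct (HP (S (list_max ns) + M)%nat) as [n [Hn HPn]].
    pose proof (proj1 (list_max_le ns (list_max ns)) (le_n _)) as Hmax.
    exists (n :: ns); split; [simpl; congruence | split].
    + constructor; [exact Hsort|]; eapply Forall_impl; [|exact Hmax]; cbv beta; intros; lia.
    + intros m [<- | Hm]; [split; [lia | exact HPn] | apply Hns, Hm].
Qed.

(* A point lying in infinitely many [A_n] would give [d] of them with
   [n >= M] arbitrary; at one of them the polynomial has value at least
   [8 ^ -(d - 1)], which forces [n + 1 <= 8 ^ (d - 1) x_d]. *)
Lemma Aset_eventually_excludes d (x : point d) :
  exists N, forall n, (N <= n)%nat -> ~ Aset d n x.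
Proof.
  apply NNPP; intros Hnot.
  assert (Hinf : forall N, exists n, (N <= n)%nat /\ Aset d n x).
  { intros N; apply NNPP; intros HN; apply Hnot; exists N; intros n Hn HA; apply HN; eauto. }
  destruct (INR_archimed 1 (coord x (pred d) * 8 ^ pred d)) as [M HM]; [lra|].
  destruct (sorted_witnesses _ M Hinf (S (pred d))) as [ns [Hlen [Hsort Hns]]].
  destruct (horner_large_at_some_power (pred d) (point_poly x) ns Hlen Hsort) as [n [Hn Hlarge]].
  destruct (Hns n Hn) as [HMn HA]; unfold Aset in HA; apply le_INR in HMn.
  change (point_poly x O) with 1 in Hlarge; rewrite Rabs_R1 in Hlarge.
  assert (H8 : 0 < 8 ^ pred d) by (apply pow_lt; lra).
  assert (Hn1 : INR n + 1 <= coord x (pred d) * 8 ^ pred d).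
  { replace (INR n + 1) with ((INR n + 1) * (1 / 8 ^ pred d) * 8 ^ pred d) by (field; lra).
    apply Rmult_le_compat_r; [lra|]; eapply Rle_trans; [|exact HA].
    apply Rmult_le_compat_l; [pose proof (pos_INR n); lra | exact Hlarge]. }
  lra.
Qed.

Lemma piercing_infinite_of_eventually_excludes {d : nat} (F : setfam d) (f : nat -> rset d) :
  (forall n, F (f n)) -> (forall x, exists N, forall n, (N <= n)%nat -> ~ f n x) ->
  piercing_infinite F.
Proof.
  intros HF Hx [P HP].
  assert (HN : forall P : list (point d),
             exists N, forall x, In x P -> forall n, (N <= n)%nat -> ~ f n x).
  { intros P'; induction P' as [|x P' [N HN]]; [exists O; intros ? []|].
    destruct (Hx x) as [N' HN']; exists (Nat.max N N').
    intros y [<- | Hy] n Hn; [apply HN' | apply (HN y Hy)]; lia. }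
  destruct (HN P) as [N HNP]; destruct (HP (f N) (HF N)) as [x [HxP HfN]].
  exact (HNP x HxP N (le_n N) HfN).
Qed.

Lemma infinite_family_of_seq {d : nat} (F : setfam d) (f : nat -> rset d) :
  (forall n, F (f n)) -> (forall i j, (i < j)%nat -> ~ same_set (f i) (f j)) ->
  infinite_family F.
Proof.
  intros HF Hf n; exists (map f (seq 0 n)); split; [split|].
  - apply Forall_map, Forall_forall; intros; apply HF.
  - generalize 0%nat; induction n as [|n IH]; intros a; simpl; [exact I|].
    split; [|apply IH].
    apply Forall_map, Forall_forall; intros j Hj; apply in_seq in Hj; apply Hf; lia.
  - rewrite length_map, length_seq; reflexivity.
Qed.

Lemma incl_firstn {T : Type} n (l : list T) : incl (firstn n l) l.
Proof. rewrite <- (firstn_skipn n l) at 2; apply incl_appl, incl_refl. Qed.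

Lemma members_firstn {d : nat} (F : setfam d) n L : members F L -> members F (firstn n L).
Proof.
  intros [HF Hd]; split; [exact (incl_Forall (incl_firstn n L) HF)|].
  revert n; induction L as [|X L IH]; intros [|n]; simpl in *; auto.
  destruct Hd as [HX Hd]; split; [exact (incl_Forall (incl_firstn n L) HX)|].
  apply IH; [inversion HF; assumption | exact Hd].
Qed.

Lemma pw_distinct_app {d : nat} (L1 L2 : list (rset d)) :
  pw_distinct L1 -> pw_distinct L2 ->
  (forall X Y, In X L1 -> In Y L2 -> ~ same_set X Y) -> pw_distinct (L1 ++ L2).
Proof.
  induction L1 as [|X L1 IH]; simpl; intros H1 H2 H12; auto.
  destruct H1 as [HX H1]; split; [|apply IH; auto].
  apply Forall_app; split; [exact HX|]; apply Forall_forall; auto.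
Qed.

Lemma members_union_split {d : nat} (A B : setfam d) L : members (setfam_union A B) L ->
  exists LA LB, members A LA /\ members B LB /\ incl LA L /\ incl LB L /\
    (length LA + length LB = length L)%nat.
Proof.
  induction L as [|X L IH]; intros [HF Hd].
  - exists [], []; repeat split; auto; intros ? [].
  - inversion HF as [|? ? HXAB HL]; subst; destruct Hd as [HX Hd].
    destruct (IH (conj HL Hd)) as [LA [LB [[HA HAd] [[HB HBd] [HiA [HiB Hlen]]]]]].
    destruct HXAB as [HXA | HXB].
    + exists (X :: LA), LB; simpl; repeat split; auto using incl_cons, in_eq, incl_tl;
        first [exact (incl_Forall HiA HX) | lia].
    + exists LA, (X :: LB); simpl; repeat split; auto using incl_cons, in_eq, incl_tl;
        first [exact (incl_Forall HiB HX) | lia].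
Qed.

(* Among [d + 2k] members, either [d + k] come from one of the two
   subfamilies, or there are at least [k + 1] of each kind and dropping [k]
   members of [A] leaves at most [d - 1] of them next to all members of [B]. *)
Lemma pq_property_union {d : nat} (A B : setfam d) k : (0 < d)%nat ->
  infinite_family A ->
  (forall M, Forall A M -> common_point M) ->
  (forall MA MB, Forall A MA -> (length MA < d)%nat -> Forall B MB -> common_point (MA ++ MB)) ->
  (forall X Y, A X -> B Y -> ~ same_set X Y) ->
  pq_property (d + 2 * k) (d + k) (setfam_union A B).
Proof.
  intros Hd HAinf HAcp Hmix Hdisj; split.
  { destruct (HAinf (d + 2 * k)%nat) as [L [[HL HLd] Hlen]].
    exists L; repeat split; auto; eapply Forall_impl; [|exact HL]; intros; left; assumption. }
  intros L HL Hlen.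
  destruct (members_union_split A B L HL) as [LA [LB [HLA [HLB [HiA [HiB Hab]]]]]].
  destruct (le_lt_dec (d + k) (length LA)) as [Ha | Ha].
  { destruct (members_firstn A (d + k) LA HLA) as [HM HMd].
    exists (firstn (d + k) LA); repeat split; auto using firstn_length_le.
    apply (incl_tran (incl_firstn _ _) HiA). }
  destruct (le_lt_dec (d + k) (length LB)) as [Hb | Hb].
  { destruct (members_firstn B (d + k) LB HLB) as [HM HMd].
    exists (firstn (d + k) LB); repeat split; auto using firstn_length_le.
    - apply (incl_tran (incl_firstn _ _) HiB).
    - apply (Hmix []); auto. }
  destruct (members_firstn A (length LA - k) LA HLA) as [HM HMd].
  destruct HLB as [HB HBd].
  assert (Hlen' : length (firstn (length LA - k) LA) = (length LA - k)%nat)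
    by (apply firstn_length_le; lia).
  exists (firstn (length LA - k) LA ++ LB); repeat split.
  - apply incl_app; [apply (incl_tran (incl_firstn _ _) HiA) | exact HiB].
  - apply pw_distinct_app; auto; intros X Y HX HY.
    rewrite Forall_forall in HM, HB; apply Hdisj; auto.
  - rewrite length_app, Hlen'; lia.
  - apply Hmix; auto; lia.
Qed.

Theorem theorem2p1 (d : nat) (hd : (1 <= d)%nat) :
  exists A B : setfam d,
    infinite_family A /\ infinite_family B /\
    (forall S, A S -> is_closed S /\ is_convex S) /\
    (forall S, B S -> is_closed S /\ is_convex S /\ is_bounded S) /\
    piercing_infinite A /\
    forall k : nat, pq_property (d + 2 * k) (d + k) (setfam_union A B).
Proof.
  assert (HA : forall n, Afam d (Aset d n)) by (intros n; exists n; reflexivity).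
  assert (HB : forall k, Bfam d (Bset d k)) by (intros k; exists k; reflexivity).
  assert (HAinf : infinite_family (Afam d))
    by (apply (infinite_family_of_seq _ (Aset d) HA); intros; apply Aset_inj; assumption).
  exists (Afam d), (Bfam d); split; [exact HAinf|]; split.
  { apply (infinite_family_of_seq _ (Bset d) HB); intros; apply Bset_inj; assumption. }
  split; [intros S [n ->]; split; [apply Aset_closed | apply Aset_convex]|].
  split; [intros S [k ->]; split; [apply Bset_closed | split; [apply Bset_convex | apply Bset_bounded]]|].
  split; [exact (piercing_infinite_of_eventually_excludes _ _ HA (Aset_eventually_excludes d))|].
  intros k; apply pq_property_union; [lia | exact HAinf | | |].
  - intros M; exact (Afam_common_point d M hd).
  - intros MA MB; exact (Afam_Bfam_common_point d MA MB).
  - intros X Y [n ->] [m ->]; exact (Aset_neq_Bset d n m hd).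
Qed.
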